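(* Let $S$ be as in the context. Then $|\mathcal{T}_k(S)|\le|\mathcal{T}_{k+1}(S)|$ for all $1\le k<n$, and for all $1\le k\le k'<n$ the number $m_{k'}$ of edges of the edge-reduced de Bruijn graph $\tilde G_{k'}(S)$, counted with multiplicity, satisfies $m_{k'}\ge|\mathcal{T}_k(S)|$.
   Context: $\Sigma$ is a finite totally ordered alphabet containing a symbol $\$$ smaller than every other symbol. $S$ is a string of length $n\ge 2$ over $\Sigma$ whose last character is $\$$ and in which $\$$ occurs nowhere else. The rotations of $S$ are the $n$ strings $S[i..n]S[1..i-1]$, $i\in[1,n]$. The rotation-trie $\mathcal{T}(S)$ is the trie of the set of rotations of $S$; $\mathcal{T}_k(S)$ denotes its set of nodes at depth $k$ (equivalently, the set of distinct length-$k$ prefixes of rotations of $S$). For $1\le k\le n$ let $Z_k(S)=S[1..n]S[1..k]$. The order-$k$ de Bruijn graph $G_k(S)$ is the directed multigraph with node set $\{Z_k(S)[i..i+k-1]: i\in[1,n]\}$ that, for every $z\in\Sigma^{k+1}$ occurring exactly $m\ge1$ times as a substring of $Z_k(S)$, contains the edge $(z[1..k],z[2..k+1])$ with multiplicity $m$. $x$ is a predecessor of $y$ (and $y$ a successor of $x$) if there is an edge $(x,y)$ of positive multiplicity. An edge $(x,y)$ is fusible if $y$ is the only successor of $x$ and $x$ is the only predecessor of $y$. The edge-reduced de Bruijn graph $\tilde G_k(S)$ is obtained from $G_k(S)$ by setting the multiplicity of every fusible edge to $1$. *)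

(* Strings are sequences over a finite alphabet T; positions are 0-based. *)
From mathcomp Require Import all_boot all_order.
Set Implicit Arguments. Unset Strict Implicit. Unset Printing Implicit Defensive.

Section RotTrie.
Variable T : eqType.

Definition substr (w : seq T) (l i : nat) : seq T := take l (drop i w).

Definition rotations (S : seq T) : seq (seq T) := [seq rot i S | i <- iota 0 (size S)].

(* T_k(S): the distinct length-k prefixes of rotations of S (nodes of the rotation trie at depth k). *)
Definition trie_level (S : seq T) (k : nat) : seq (seq T) :=
  undup [seq take k r | r <- rotations S].

Definition Zk (S : seq T) (k : nat) : seq T := S ++ take k S.

Definition occ (w z : seq T) : nat :=
  count (fun i => substr w (size z) i == z) (iota 0 (size w - size z).+1).

Definition dbg_nodes (S : seq T) (k : nat) : seq (seq T) :=
  undup [seq substr (Zk S k) k i | i <- iota 0 (size S)].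

Definition dbg_words (S : seq T) (k : nat) : seq (seq T) :=
  undup [seq substr (Zk S k) k.+1 i | i <- iota 0 (size (Zk S k) - k)].

(* multiplicity of the edge (x,y) in G_k(S): each z in Sigma^{k+1} occurring m>=1 times
   in Z_k(S) contributes the edge (z[1..k], z[2..k+1]) with multiplicity m. *)
Definition dbg_mult (S : seq T) (k : nat) (x y : seq T) : nat :=
  \sum_(z <- dbg_words S k) ((take k z == x) && (drop 1 z == y)) * occ (Zk S k) z.

Definition dbg_edge (S : seq T) (k : nat) (x y : seq T) : bool := 0 < dbg_mult S k x y.

(* fusible: y is the only successor of x and x is the only predecessor of y
   (all successors/predecessors are nodes of the graph) *)
Definition fusible (S : seq T) (k : nat) (x y : seq T) : bool :=
  [&& dbg_edge S k x y,
      all (fun y' => dbg_edge S k x y' ==> (y' == y)) (dbg_nodes S k) &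
      all (fun x' => dbg_edge S k x' y ==> (x' == x)) (dbg_nodes S k)].

Definition red_mult (S : seq T) (k : nat) (x y : seq T) : nat :=
  if fusible S k x y then 1 else dbg_mult S k x y.

Definition red_edges (S : seq T) (k : nat) : nat :=
  \sum_(x <- dbg_nodes S k) \sum_(y <- dbg_nodes S k) red_mult S k x y.

End RotTrie.

(* Every depth-k node of the rotation trie has a child, so the levels can only
   grow.  The nodes of G_k(S) are exactly the depth-k trie nodes, and every
   node Z_k[i..i+k-1] has the out-edge towards Z_k[i+1..i+k] given by the
   occurrence of Z_k[i..i+k]; an edge of positive multiplicity keeps a positive
   multiplicity after reduction, so the reduced graph has at least as many
   edges as nodes, hence at least |T_k(S)| <= |T_k'(S)| of them. *)
From mathcomp Require Import all_boot all_order.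
From mathcomp Require Import zify.

Set Implicit Arguments.
Unset Strict Implicit.

Section RotationTrie.
Variable T : eqType.
Implicit Types (S w : seq T) (k l i : nat).

Lemma size_substr w l i : i + l <= size w -> size (substr w l i) = l.
Proof. by move=> hw; rewrite /substr size_takel // size_drop; lia. Qed.

Lemma take_substrS w l i : take l (substr w l.+1 i) = substr w l i.
Proof. by rewrite /substr take_takel. Qed.

Lemma drop1_substrS w l i : drop 1 (substr w l.+1 i) = substr w l i.+1.
Proof. by rewrite /substr -[i.+1]add1n -drop_drop [RHS]take_drop addn1. Qed.

Lemma occ_substr_gt0 w l i : i + l <= size w -> 0 < occ w (substr w l i).
Proof.
move=> hw; rewrite /occ -has_count; apply/hasP; exists i; last by rewrite size_substr.
by rewrite mem_iota size_substr //; lia.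
Qed.

Lemma size_Zk S k : k <= size S -> size (Zk S k) = size S + k.
Proof. by move=> hk; rewrite /Zk size_cat size_takel. Qed.

Lemma substr_Zk S k i : k <= size S -> i < size S ->
  substr (Zk S k) k i = take k (rot i S).
Proof.
move=> hk hi; rewrite /substr /Zk /rot drop_cat hi !take_cat size_drop.
case: ifP => // _; rewrite -!take_min; congr (_ ++ take _ S); lia.
Qed.

Lemma substr_Zk_size S k : k <= size S -> substr (Zk S k) k (size S) = substr (Zk S k) k 0.
Proof. by move=> hk; rewrite /substr /Zk drop_size_cat // drop0 take_takel ?takel_cat. Qed.

Lemma dbg_nodes_trie_level S k : k <= size S -> dbg_nodes S k = trie_level S k.
Proof.
move=> hk; rewrite /dbg_nodes /trie_level /rotations -map_comp; congr undup.
by apply/eq_in_map => i; rewrite mem_iota => /andP[_ hi]; apply: substr_Zk.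
Qed.

Lemma trie_level_sub_take S k :
  {subset trie_level S k <= map (take k) (trie_level S k.+1)}.
Proof.
move=> x; rewrite mem_undup => /mapP[r hr ->].
apply/mapP; exists (take k.+1 r); last by rewrite take_takel.
by rewrite mem_undup; apply/mapP; exists r.
Qed.

Lemma size_trie_level_leS S k : size (trie_level S k) <= size (trie_level S k.+1).
Proof.
rewrite -(size_map (take k) (trie_level S k.+1)); apply: uniq_leq_size; first exact: undup_uniq.
exact: trie_level_sub_take.
Qed.

Lemma size_trie_level_mono S : {homo (size \o trie_level S) : k k' / k <= k'}.
Proof.
apply: homo_leq => [//|y x z|k]; first exact: leq_trans.
exact: size_trie_level_leS.
Qed.

Lemma dbg_edge_substrS S k i : k <= size S -> i < size S ->
  dbg_edge S k (substr (Zk S k) k i) (substr (Zk S k) k i.+1).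
Proof.
move=> hk hi; rewrite /dbg_edge /dbg_mult -take_substrS -drop1_substrS.
set z := substr (Zk S k) k.+1 i.
have hzw : z \in dbg_words S k.
  by rewrite mem_undup; apply/mapP; exists i => //; rewrite mem_iota size_Zk; lia.
rewrite (bigD1_seq z hzw (undup_uniq _)) /= !eqxx mul1n ltn_addr //.
by apply: occ_substr_gt0; rewrite size_Zk; lia.
Qed.

Lemma dbg_node_has_succ S k x : k <= size S -> x \in dbg_nodes S k ->
  exists2 y, y \in dbg_nodes S k & dbg_edge S k x y.
Proof.
move=> hk; rewrite mem_undup => /mapP[i]; rewrite mem_iota => /andP[_ hi] ->.
have hnode j : j < size S -> substr (Zk S k) k j \in dbg_nodes S k.
  by move=> hj; rewrite mem_undup; apply/mapP; exists j; rewrite ?mem_iota.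
exists (substr (Zk S k) k i.+1); last exact: dbg_edge_substrS.
have [hi1 | hn] := ltnP i.+1 (size S); first exact: hnode.
have -> : i.+1 = size S by lia.
by rewrite substr_Zk_size //; apply: hnode; lia.
Qed.

Lemma red_mult_gt0 S k x y : dbg_edge S k x y -> 0 < red_mult S k x y.
Proof. by rewrite /red_mult; case: ifP. Qed.

Lemma size_dbg_nodes_le_red_edges S k :
  (forall x, x \in dbg_nodes S k -> exists2 y, y \in dbg_nodes S k & dbg_edge S k x y) ->
  size (dbg_nodes S k) <= red_edges S k.
Proof.
move=> hsucc; rewrite /red_edges -sum1_size big_seq [X in _ <= X]big_seq.
apply: leq_sum => x /hsucc[y hy hxy].
by rewrite (bigD1_seq y hy (undup_uniq _)) /= ltn_addr ?red_mult_gt0.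
Qed.

End RotationTrie.

Theorem mainTheorem6 (d : Order.disp_t) (Sigma : finOrderType d) (dollar : Sigma)
  (S : seq Sigma) :
  (forall c : Sigma, c != dollar -> (dollar < c)%O) ->
  2 <= size S ->
  last dollar S = dollar ->
  count_mem dollar S = 1 ->
  (forall k, 1 <= k -> k < size S ->
     size (trie_level S k) <= size (trie_level S k.+1)) /\
  (forall k k', 1 <= k -> k <= k' -> k' < size S ->
     size (trie_level S k) <= red_edges S k').
Proof.
move=> _ _ _ _; split=> [k _ _ | k k' _ hkk' hk'n]; first exact: size_trie_level_leS.
apply: leq_trans (size_trie_level_mono S hkk') _.
rewrite /= -dbg_nodes_trie_level; last exact: ltnW.
by apply: size_dbg_nodes_le_red_edges => x; apply: dbg_node_has_succ; apply: ltnW.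
Qed.
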